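(* Let $n,k,t$ be positive integers with $k<n$ and $q$ a prime power. Let $\Omega$ be an $(nt-kt-2)$-dimensional subspace of $\mathrm{PG}(nt-1,q)$, let $\Gamma$ be a plane skew from $\Omega$, and let $\bar{B}$ be a minimal blocking set (with respect to lines) of $\Gamma$ such that every point of $\bar{B}$ lies on at least $t$ tangent lines to $\bar{B}$ in $\Gamma$. Let $\Pi=\langle\Omega,\Gamma\rangle$ and let $K$ be the cone in $\Pi$ with vertex $\Omega$ and base $\bar{B}$. Then for every point $P$ of $K$ there exist a subspace $\mu$ of $\Pi$ of codimension $2$ in $\Pi$ and at least $t$ hyperplanes of $\Pi$ through $P$, each of which meets $K$ only in points of $\mu$.
   Context: The cone with vertex a subspace $\Omega$ and base a point set $\bar{B}$ contained in a subspace skew from $\Omega$ is $\bigcup_{P\in\bar B}\langle P,\Omega\rangle$. A blocking set of a plane is a point set meeting every line; it is minimal if no proper subset is a blocking set. A tangent line to $\bar B$ is a line meeting $\bar B$ in exactly one point. *)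

(* Projective space PG(N-1,q) modelled as the lattice of
   subspaces of F^N (row vectors), F a finite field of order q.
   A projective subspace is represented by its canonical square matrix
   (U with <<U>> = U), so that distinct subspaces are distinct matrices;
   projective dimension d  <->  \rank U = d+1. *)
From HB Require Import structures.
From mathcomp Require Import all_boot all_order all_algebra.
Set Implicit Arguments. Unset Strict Implicit. Unset Printing Implicit Defensive.
Import GRing.Theory.
Local Open Scope ring_scope.

Section PG.
Variables (F : finFieldType) (N : nat).
Local Notation sub := 'M[F]_N.

Definition is_subsp (U : sub) : bool := (<<U>>%MS == U).
Definition is_point (U : sub) : bool := is_subsp U && (\rank U == 1)%N.
Definition is_line_in (G L : sub) : bool :=
  [&& is_subsp L, \rank L == 2 & (L <= G)%MS]%N.
Definition is_hyperplane_of (Pi H : sub) : bool :=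
  [&& is_subsp H, (\rank H == (\rank Pi).-1)%N & (H <= Pi)%MS].

Definition pts_on (B : {set sub}) (L : sub) : {set sub} :=
  [set P in B | (P <= L)%MS].

Definition blocking_set (G : sub) (B : {set sub}) : Prop :=
  (forall P, P \in B -> is_point P && (P <= G)%MS) /\
  (forall L, is_line_in G L -> pts_on B L != set0).

Definition minimal_blocking_set (G : sub) (B : {set sub}) : Prop :=
  blocking_set G B /\ (forall B' : {set sub}, B' \proper B -> ~ blocking_set G B').

Definition tangents_at (G : sub) (B : {set sub}) (P : sub) : {set sub} :=
  [set L | is_line_in G L && (P <= L)%MS && (#|pts_on B L| == 1)%N].

Definition cone (Om : sub) (B : {set sub}) : {set sub} :=
  [set X | is_point X && [exists Q in B, (X <= Q + Om)%MS]].
End PG.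

(* A point P of the cone lies on <Q, Om> for some Q in B; take mu := <Q, Om>
   and, for each of the t tangents L to B through Q, the hyperplane <L, Om>
   of Pi.  Since Om is skew from Ga, joining with Om is injective on the
   subspaces of Ga and <A, Om> meets <B, Om> in <A meet B, Om>.  So a cone
   point X on <L, Om> coming from Q' in B lies in Om when Q' is off L, and
   Q' = Q otherwise because L is a tangent: in both cases X is in mu. *)
From HB Require Import structures.
From mathcomp Require Import all_boot all_order all_algebra.
Local Open Scope ring_scope.

Lemma rank1_capmx0 (F : fieldType) (m n : nat) (Q : 'M[F]_n) (L : 'M[F]_(m, n)) :
  \rank Q = 1%N -> ~~ (Q <= L)%MS -> (Q :&: L)%MS = 0.
Proof.
move=> rQ QnL; apply/eqP; rewrite -mxrank_eq0.
have [le_QL_Q eq_QL_Q] := mxrank_leqif_sup (capmxSl Q L).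
have : \rank (Q :&: L)%MS != \rank Q.
  by rewrite eq_QL_Q; apply: contra QnL => /submx_trans; apply; apply: capmxSr.
by move: le_QL_Q; rewrite rQ; case: (\rank _) => [|[]].
Qed.

Section SkewJoin.
Context {F : fieldType} {n : nat} {Om Ga : 'M[F]_n}.
Hypothesis skew : (Om :&: Ga)%MS = 0.

Lemma mxrank_skew_addsmx [A : 'M[F]_n] :
  (A <= Ga)%MS -> \rank (A + Om)%MS = (\rank A + \rank Om)%N.
Proof.
move=> AGa; rewrite -mxrank_sum_cap.
suff /eqP -> : (A :&: Om)%MS == 0 by rewrite mxrank0 addn0.
by rewrite -submx0 -skew capmxC capmxS.
Qed.

Lemma skew_addsmx_sub [A B : 'M[F]_n] :
  (A <= Ga)%MS -> (B <= Ga)%MS -> (A <= B + Om)%MS = (A <= B)%MS.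
Proof.
move=> AGa BGa; apply/idP/idP => [AB|]; last by move/submx_trans; apply; apply: addsmxSl.
have : (A <= (B + Om) :&: Ga)%MS by rewrite sub_capmx AB.
by rewrite -(matrix_modl Om BGa) skew addsmx0.
Qed.

Lemma capmx_skew_addsmx [A B : 'M[F]_n] :
  (A <= Ga)%MS -> (B <= Ga)%MS ->
  ((A + Om) :&: (B + Om) <= (A :&: B) + Om)%MS.
Proof.
move=> AGa BGa.
have AcapB : (A :&: (B + Om) <= A :&: B)%MS.
  rewrite sub_capmx capmxSl -(skew_addsmx_sub _ BGa) ?capmxSr //.
  exact: submx_trans (capmxSl _ _) AGa.
rewrite (addsmxC A) -(matrix_modl A (addsmxSr B Om)) addsmxC.
exact: addsmxS.
Qed.

Lemma genmx_skew_addsmx_inj [A B : 'M[F]_n] :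
  (A <= Ga)%MS -> (B <= Ga)%MS ->
  <<(A + Om)%MS>>%MS = <<(B + Om)%MS>>%MS -> <<A>>%MS = <<B>>%MS.
Proof.
move=> AGa BGa eqAB; apply: eq_genmx; apply/eqmxP.
have AB : (A <= <<(B + Om)%MS>>)%MS by rewrite -eqAB genmxE addsmxSl.
have BA : (B <= <<(A + Om)%MS>>)%MS by rewrite eqAB genmxE addsmxSl.
rewrite genmxE skew_addsmx_sub // in AB; rewrite genmxE skew_addsmx_sub // in BA.
by rewrite AB BA.
Qed.

End SkewJoin.

Lemma cone_sub_tangent_join (F : finFieldType) (n : nat) (Om Ga : 'M[F]_n)
    (B : {set 'M[F]_n}) (Q L X : 'M[F]_n) :
  (Om :&: Ga)%MS = 0 -> (forall P, P \in B -> is_point P && (P <= Ga)%MS) ->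
  Q \in B -> L \in tangents_at Ga B Q -> X \in cone Om B ->
  (X <= L + Om)%MS -> (X <= Q + Om)%MS.
Proof.
move=> skew B_pts; rewrite !inE => QB.
move=> /andP[/andP[/and3P[_ _ LGa] QL] /cards1P[R BL1]].
move=> /andP[_ /existsP[Q' /andP[Q'B XQ']]] XL.
have /andP[/andP[_ /eqP rQ'] Q'Ga] := B_pts Q' Q'B.
have [Q'L | Q'nL] := boolP (Q' <= L)%MS.
  have on_L (S : 'M[F]_n) : S \in B -> (S <= L)%MS -> S = R.
    by move=> SB SL; apply/set1P; rewrite -BL1 inE SB.
  by rewrite (on_L _ QB QL) -(on_L _ Q'B Q'L).
have XOm : (X <= Om)%MS.
  have : (X <= (Q' + Om) :&: (L + Om))%MS by rewrite sub_capmx XQ' XL.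
  move/submx_trans/(_ (capmx_skew_addsmx skew Q'Ga LGa)).
  by rewrite rank1_capmx0 // adds0mx.
exact: submx_trans XOm (addsmxSr _ _).
Qed.

Lemma is_subsp_genmx (F : finFieldType) (n : nat) (A : 'M[F]_n) : is_subsp <<A>>%MS.
Proof. by rewrite /is_subsp genmx_id. Qed.

Theorem lemma4p3 (F : finFieldType) (n k t : nat)
  (hn : (0 < n)%N) (hk : (0 < k)%N) (ht : (0 < t)%N) (hkn : (k < n)%N)
  (Om Ga : 'M[F]_(n * t)) (B : {set 'M[F]_(n * t)})
  (hOm : is_subsp Om) (hOmdim : \rank Om = (n * t - k * t - 1)%N)
  (hGa : is_subsp Ga) (hGadim : \rank Ga = 3%N)
  (hskew : \rank (Om :&: Ga)%MS = 0%N)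
  (hB : minimal_blocking_set Ga B)
  (htan : forall P, P \in B -> (t <= #|tangents_at Ga B P|)%N) :
  let Pi := (Om + Ga)%MS in
  let K := cone Om B in
  forall P, P \in K ->
    exists mu : 'M[F]_(n * t),
      [/\ is_subsp mu, (mu <= Pi)%MS, \rank mu = (\rank Pi - 2)%N &
      exists Hs : {set 'M[F]_(n * t)},
        [/\ (t <= #|Hs|)%N &
          forall H, H \in Hs ->
            [/\ is_hyperplane_of Pi H, (P <= H)%MS &
                forall X, X \in K -> (X <= H)%MS -> (X <= mu)%MS]]].
Proof.
move=> Pi K P; rewrite inE => /andP[_ /existsP[Q /andP[QB PQ]]].
have skew : (Om :&: Ga)%MS = 0 by apply/eqP; rewrite -mxrank_eq0 hskew.
have [[B_pts _] _] := hB.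
have /andP[/andP[_ /eqP rQ] QGa] := B_pts Q QB.
have rPi : \rank Pi = (3 + \rank Om)%N.
  by rewrite /Pi addsmxC (mxrank_skew_addsmx skew (submx_refl Ga)) hGadim.
have join_sub_Pi A : (A <= Ga)%MS -> (<<(A + Om)%MS>> <= Pi)%MS.
  by move=> AGa; rewrite genmxE addsmx_sub addsmxSl (submx_trans AGa) ?addsmxSr.
exists <<(Q + Om)%MS>>%MS; split.
- exact: is_subsp_genmx.
- exact: join_sub_Pi.
- by rewrite genmxE (mxrank_skew_addsmx skew QGa) rPi rQ.
exists [set <<(L + Om)%MS>>%MS | L in tangents_at Ga B Q]; split.
  rewrite card_in_imset ?htan // => L1 L2.
  rewrite !inE => /andP[/andP[/and3P[L1sub _ L1Ga] _] _].
  move=> /andP[/andP[/and3P[L2sub _ L2Ga] _] _] eqL12.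
  by have := genmx_skew_addsmx_inj skew L1Ga L2Ga eqL12; rewrite (eqP L1sub) (eqP L2sub).
move=> _ /imsetP[L tanL ->]; move: (tanL); rewrite [L \in _]inE.
move=> /andP[/andP[/and3P[_ /eqP rL LGa] QL] _]; split.
- rewrite /is_hyperplane_of is_subsp_genmx join_sub_Pi // genmxE.
  by rewrite (mxrank_skew_addsmx skew LGa) rL rPi eqxx.
- by rewrite genmxE (submx_trans PQ) // addsmxS.
- by move=> X XK; rewrite !genmxE; apply: cone_sub_tangent_join skew B_pts QB tanL XK.
Qed.
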